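(* Let $T$ be a tower gadget of height $h\in\mathbb{N}$ contained in a graph $G$ (connected to the rest of $G$ only through $v$ and $w$), and let $M$ be a perfect matching of $G$ such that $T$ is in locked state with respect to $M$. If $(P_1,\dots,P_d)$ is a well-behaved flip sequence for $T$ starting from $M$ such that $T$ is in default state with respect to $M\triangle P_1\triangle\cdots\triangle P_d$, then $d\ge 2h-2$.
   Context: A tower gadget of height $h$ is the induced subgraph on vertices $\{v,w\}\cup\{a_i,b_i: 0\le i\le h\}$ with edge set $\{va_0,b_0w\}\cup\{a_ib_i:0\le i\le h\}\cup\{a_ia_{i-1},b_ib_{i-1}:1\le i\le h\}$. With respect to an edge set $M$: $T$ is in default state if $\{va_0,b_0w\}\cup\{a_ib_i:1\le i\le h\}\subseteq M$; $T$ is locked if $\{va_0,b_0w\}\cup\{a_ib_i:1\le i\le h-2\}\cup\{a_ha_{h-1},b_hb_{h-1}\}\subseteq M$; $T$ is in semi-default state if $va_0,b_0w\in M$. A path is alternating w.r.t. an edge set $S$ if its consecutive edges alternate between belonging and not belonging to $S$ (it may start or end with either kind). A well-behaved flip sequence for $T$ starting from $M$ is a sequence $(P_1,\dots,P_d)$ where each $P_i$ is a path from $v$ to $w$ inside $T$ that is alternating with respect to $M\triangle P_1\triangle\cdots\triangle P_{i-1}$ ($\triangle$ = symmetric difference). *)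

From mathcomp Require Import all_boot.
Set Implicit Arguments. Unset Strict Implicit. Unset Printing Implicit Defensive.

(* Vertices of a tower gadget of height h:
   inl true = v, inl false = w, inr (i, true) = a_i, inr (i, false) = b_i. *)
Definition TV (h : nat) : finType := (bool + ('I_h.+1 * bool))%type.

Definition tv {h} : TV h := inl true.
Definition tw {h} : TV h := inl false.
Definition ta {h} (i : nat) : TV h := inr (inord i, true).
Definition tb {h} (i : nat) : TV h := inr (inord i, false).

Definition tadj_dir {h} (x y : TV h) : bool :=
  match x, y with
  | inl true, inr (i, true) => (i == 0 :> nat)                 (* v a_0 *)
  | inr (i, false), inl false => (i == 0 :> nat)               (* b_0 w *)
  | inr (i, true), inr (j, false) => (i == j :> nat)           (* a_i b_i *)
  | inr (i, true), inr (j, true) => (i == j.+1 :> nat)         (* a_i a_{i-1} *)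
  | inr (i, false), inr (j, false) => (i == j.+1 :> nat)       (* b_i b_{i-1} *)
  | _, _ => false
  end.

Definition tadj {h} (x y : TV h) : bool := tadj_dir x y || tadj_dir y x.

Section Graphs.
Variable V : finType.

(* edges are unordered pairs, represented as 2-element sets *)
Definition symd (A B : {set {set V}}) : {set {set V}} := (A :\: B) :|: (B :\: A).

Definition is_edge (e : rel V) (E : {set V}) : Prop :=
  exists x y, e x y /\ E = [set x; y].

Definition perfect_matching (e : rel V) (M : {set {set V}}) : Prop :=
  (forall E, E \in M -> is_edge e E) /\
  (forall x : V, #|[set E in M | x \in E]| = 1).

(* T (given by the embedding f of its vertices) is a tower gadget of height h
   which is an induced subgraph of G = (V, e), attached to the rest of G only
   through v and w. *)
Definition tower_in_graph (e : rel V) (h : nat) (f : TV h -> V) : Prop :=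
  injective f /\
  (forall x y : TV h, e (f x) (f y) = tadj x y) /\
  (forall (x : TV h) (u : V), x != tv -> x != tw -> u \notin codom f ->
      ~~ e (f x) u).

Definition tower_edge h (f : TV h -> V) (E : {set V}) : Prop :=
  exists x y : TV h, tadj x y /\ E = [set f x; f y].

Definition fe h (f : TV h -> V) (x y : TV h) : {set V} := [set f x; f y].

Definition default_state h (f : TV h -> V) (M : {set {set V}}) : Prop :=
  fe f tv (ta 0) \in M /\ fe f (tb 0) tw \in M /\
  (forall i, 1 <= i <= h -> fe f (ta i) (tb i) \in M).

Definition locked_state h (f : TV h -> V) (M : {set {set V}}) : Prop :=
  fe f tv (ta 0) \in M /\ fe f (tb 0) tw \in M /\
  (forall i, 1 <= i <= h - 2 -> fe f (ta i) (tb i) \in M) /\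
  fe f (ta h) (ta h.-1) \in M /\ fe f (tb h) (tb h.-1) \in M.

Definition semi_default_state h (f : TV h -> V) (M : {set {set V}}) : Prop :=
  fe f tv (ta 0) \in M /\ fe f (tb 0) tw \in M.

Definition path_edges (p : seq V) : seq {set V} :=
  [seq [set x.1; x.2] | x <- zip p (behead p)].

Definition path_edge_set (p : seq V) : {set {set V}} := [set E in path_edges p].

Definition tower_path h (f : TV h -> V) (p : seq V) : Prop :=
  uniq p /\ head (f tv) p = f tv /\ p != [::] /\ last (f tv) p = f tw /\
  (forall E, E \in path_edges p -> tower_edge f E).

Definition alternating (S : {set {set V}}) (p : seq V) : Prop :=
  forall j, j.+1 < size (path_edges p) ->
    (nth set0 (path_edges p) j \in S) != (nth set0 (path_edges p) j.+1 \in S).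

Fixpoint well_behaved h (f : TV h -> V) (S : {set {set V}}) (Ps : seq (seq V))
  : Prop :=
  match Ps with
  | [::] => True
  | p :: Ps' => tower_path f p /\ alternating S p /\
                well_behaved f (symd S (path_edge_set p)) Ps'
  end.

Definition flip_all (M : {set {set V}}) (Ps : seq (seq V)) : {set {set V}} :=
  foldl (fun S p => symd S (path_edge_set p)) M Ps.

End Graphs.

From mathcomp Require Import all_boot zify.
Set Implicit Arguments. Unset Strict Implicit. Unset Printing Implicit Defensive.

(* Flipping an alternating v-w path keeps every vertex of T other than v and w
   matched exactly once.  A simple v-w path in the tower is
   v a_0 ... a_k b_k ... b_0 w, so it contains exactly one rung a_k b_k, and each
   flip changes the number of matched rungs by at most one.  The rung a_h b_h is
   unmatched in the locked state (a_h is matched to a_(h-1)) and matched in the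
   default state; look at the flip that matches it.  Its path visits every a_i,
   i < h, as an interior vertex, whose matching edge therefore lies on the path
   both before and after the flip, so no rung a_i b_i with i < h is matched then.
   Going from at least h-2 matched rungs down to 0, and from at most 1 up to h,
   takes at least (h-2) + 1 + (h-1) flips. *)


Lemma set2_eq (T : finType) (a b x y : T) :
  [set a; b] = [set x; y] -> (a = x /\ b = y) \/ (a = y /\ b = x).
Proof.
move=> E.
have : a \in [set x; y] by rewrite -E set21.
have : b \in [set x; y] by rewrite -E set22.
have : x \in [set a; b] by rewrite E set21.
have : y \in [set a; b] by rewrite E set22.
by rewrite !inE => /pred2P[]? /pred2P[]? /pred2P[]? /pred2P[]?; subst; auto.
Qed.

Lemma foldl_switch (T R : Type) (F : R -> T -> R) (g : pred R) z s :
  ~~ g z -> g (foldl F z s) ->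
  exists s1 x s2, [/\ s = s1 ++ x :: s2, ~~ g (foldl F z s1) & g (F (foldl F z s1) x)].
Proof.
elim: s z => [|x s IH] z gz /=; first by rewrite (negbTE gz).
have [gx _|gx /(IH _ gx)[s1 [y [s2 [-> g1 g2]]]]] := boolP (g (F z x)).
  by exists [::], x, s.
by exists (x :: s1), y, s2.
Qed.

Lemma path_edges_cons2 (T : finType) (x y : T) s :
  path_edges [:: x, y & s] = [set x; y] :: path_edges (y :: s).
Proof. by []. Qed.

Section PathEdges.
Variable V : finType.
Implicit Types (S P : {set {set V}}) (s t : seq V) (u x y : V) (E : {set V}).

Lemma path_edges_cat s x t :
  path_edges (s ++ x :: t) = path_edges (rcons s x) ++ path_edges (x :: t).
Proof. by elim: s => [//|a [//|b s] IH]; rewrite /= path_edges_cons2 -IH. Qed.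

Lemma path_edges_map (W : finType) (g : V -> W) s :
  path_edges (map g s) = [seq g @: E | E <- path_edges s].
Proof.
elim: s => [//|x [//|y s] IH].
by rewrite /= in IH *; rewrite path_edges_cons2 IH imsetU1 imset_set1.
Qed.

Lemma path_edges_vertex s E u : E \in path_edges s -> u \in E -> u \in s.
Proof.
elim: s => [//|x [//|y s] IH]; rewrite path_edges_cons2 inE.
case/predU1P => [-> | /IH uS /uS uys]; last by rewrite inE uys orbT.
by rewrite !inE => /pred2P[] ->; rewrite eqxx ?orbT.
Qed.

Lemma path_edges_cover s u :
  1 < size s -> u \in s -> exists2 E, E \in path_edges s & u \in E.
Proof.
elim: s => [//|x [//|y s] IH] _; rewrite inE path_edges_cons2.
case/predU1P => [->|us]; first by exists [set x; y]; rewrite ?mem_head ?set21.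
case: s IH us => [|z s] IH us.
  by move: us; rewrite mem_seq1 => /eqP->; exists [set x; y]; rewrite ?mem_head ?set22.
by have [E ? ?] := IH isT us; exists E; rewrite // inE; apply/orP; right.
Qed.

Lemma codom_map (T : finType) (g : T -> V) s :
  {subset s <= codom g} -> exists q, s = map g q.
Proof.
elim: s => [|x s IH] s_g; first by exists [::].
have [|q ->] := IH; first by move=> y ys; apply: s_g; rewrite inE ys orbT.
by have /codomP[y ->] := s_g x (mem_head x s); exists (y :: q).
Qed.

Lemma path_of_edges (r : rel V) x s : symmetric r ->
  (forall E, E \in path_edges (x :: s) -> exists a b, r a b /\ E = [set a; b]) ->
  path r x s.
Proof.
move=> r_sym; elim: s x => [//|y s IH] x edges /=; apply/andP; split; last first.
  by apply: IH => E Es; apply: edges; rewrite path_edges_cons2 inE Es orbT.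
have [a [b [ab /set2_eq[[-> ->]|[-> ->]]]]] := edges [set x; y] (mem_head _ _) => //.
by rewrite r_sym.
Qed.

Lemma card_symd_preimset (I : finType) (g : I -> {set V}) S P :
  #|[set i | g i \in symd S P]| <= #|[set i | g i \in S]| + #|[set i | g i \in P]|.
Proof.
apply: leq_trans (leq_card_setU _ _); apply: subset_leq_card; apply/subsetP => i.
by rewrite in_setU !inE; case: (g i \in S); case: (g i \in P).
Qed.

Lemma in_symd S P E : (E \in symd S P) = ((E \in S) != (E \in P)).
Proof. by rewrite !inE; case: (E \in S); case: (E \in P). Qed.

Lemma symdK S P : symd (symd S P) P = S.
Proof. by apply/setP => E; rewrite !in_symd; case: (E \in S); case: (E \in P). Qed.

Definition edges_at S u : {set {set V}} := [set E in S | u \in E].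

Lemma in_edges_at S u E : (E \in edges_at S u) = (E \in S) && (u \in E).
Proof. by rewrite inE. Qed.

Lemma in_path_edge_set s E : (E \in path_edge_set s) = (E \in path_edges s).
Proof. by rewrite inE. Qed.

Lemma alternatingE S s :
  alternating S s <-> sorted [rel E F | (E \in S) != (F \in S)] (path_edges s).
Proof. by split => [alt | /(sortedP set0)]; first apply/(sortedP set0). Qed.

Lemma alternating_symd S s : alternating S s -> alternating (symd S (path_edge_set s)) s.
Proof.
move/alternatingE => alt; apply/alternatingE.
rewrite (@eq_in_sorted _ (mem (path_edges s)) _ [rel E F | (E \in S) != (F \in S)]) ?allss //.
move=> E F Es Fs /=; rewrite !in_symd !inE Es Fs.
by case: (E \in S); case: (F \in S).
Qed.

Lemma alternating_interior S s u :
  uniq s -> alternating S s -> u \in s -> u != head u s -> u != last u s ->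
  exists E1 E2,
    [/\ E1 \in S, E2 \notin S & edges_at (path_edge_set s) u = [set E1; E2]].
Proof.
move=> s_uniq /alternatingE alt /splitPr s_split; case: s_split s_uniq alt => l1 l2.
case/lastP: l1 => [|l1 x]; first by rewrite /= eqxx.
case: l2 => [|y l2]; first by rewrite last_cat /= eqxx.
rewrite cat_rcons => s_uniq alt _ _.
have edgesE : path_edges (l1 ++ [:: x, u, y & l2]) =
    path_edges (rcons l1 x) ++ [:: [set x; u], [set u; y] & path_edges (y :: l2)].
  by rewrite path_edges_cat.
move: alt; rewrite edgesE sorted_cat_cons /= => /andP[_ /andP[alt_u _]].
move: s_uniq; rewrite -cat_rcons cat_uniq => /and3P[_ /hasPn u_l1 /andP[u_l2 _]].
have {}u_l1 : u \notin rcons l1 x := u_l1 u (mem_head _ _).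
have edges_u : edges_at (path_edge_set (l1 ++ [:: x, u, y & l2])) u =
    [set [set x; u]; [set u; y]].
  apply/setP => E; rewrite !inE edgesE mem_cat !inE.
  have [uE|uE] := boolP (u \in E); last first.
    by rewrite andbF; apply/esym/norP; split; apply: contraNneq uE => ->;
      rewrite !inE eqxx ?orbT.
  have /negbTE-> : E \notin path_edges (rcons l1 x).
    by apply: contra u_l1 => Es; apply: path_edges_vertex Es uE.
  have /negbTE-> : E \notin path_edges (y :: l2).
    by apply: contra u_l2 => Es; apply: path_edges_vertex Es uE.
  by rewrite andbT orbF.
rewrite cat_rcons; have [S_xu|S_xu] := boolP ([set x; u] \in S).
  exists [set x; u], [set u; y]; split => //.
  by move: alt_u; rewrite S_xu; case: (_ \in S).
exists [set u; y], [set x; u]; split => //; last by rewrite edges_u setUC.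
by move: alt_u; rewrite (negbTE S_xu); case: (_ \in S).
Qed.

Lemma card_edges_at_symd S s u :
  uniq s -> alternating S s -> u != head u s -> u != last u s ->
  #|edges_at (symd S (path_edge_set s)) u| = #|edges_at S u|.
Proof.
move=> s_uniq alt u_head u_last.
have [us|us] := boolP (u \in s); last first.
  apply: eq_card => E; rewrite !in_edges_at in_symd in_path_edge_set.
  have [uE|] := boolP (u \in E); rewrite ?andbF // !andbT.
  have /negbTE-> : E \notin path_edges s.
    by apply: contra us => Es; apply: path_edges_vertex Es uE.
  by case: (E \in S).
have [E1 [E2 [E1S E2S edgesE]]] := alternating_interior s_uniq alt us u_head u_last.
have in_edges_u E : (E \in path_edge_set s) && (u \in E) = (E == E1) || (E == E2).
  by rewrite -in_set2 -edgesE in_edges_at.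
have /andP[_ uE1] : (E1 \in path_edge_set s) && (u \in E1) by rewrite in_edges_u eqxx.
have /andP[_ uE2] : (E2 \in path_edge_set s) && (u \in E2) by rewrite in_edges_u eqxx orbT.
have -> : edges_at (symd S (path_edge_set s)) u = E2 |: (edges_at S u :\ E1).
  apply/setP => E; rewrite in_setU1 in_setD1 !in_edges_at in_symd.
  have [uE|uE] := boolP (u \in E); last first.
    by rewrite !andbF orbF; apply/esym/eqP => E_E2; rewrite E_E2 uE2 in uE.
  have := in_edges_u E; rewrite uE !andbT => ->.
  have [->|E_E1] := eqVneq E E1.
    by rewrite E1S orbF; apply/esym/negbTE; apply: contraNneq E2S => <-.
  by have [->|] := eqVneq E E2; [rewrite (negbTE E2S) | case: (E \in S)].
rewrite cardsU1 (cardsD1 E1 (edges_at S u)) in_setD1 !in_edges_at E1S uE1.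
by rewrite (negbTE E2S) andbF.
Qed.

Lemma matched_edge_on_path S s u E :
  uniq s -> alternating S s -> u \in s -> u != head u s -> u != last u s ->
  #|edges_at S u| = 1 -> E \in S -> u \in E -> E \in path_edge_set s.
Proof.
move=> s_uniq alt us u_head u_last deg1 ES uE.
have [E1 [E2 [E1S _ edgesE]]] := alternating_interior s_uniq alt us u_head u_last.
have /andP[E1s uE1] : (E1 \in path_edge_set s) && (u \in E1).
  by rewrite -in_edges_at edgesE set21.
have /card_le1_eqP uniq_u : #|edges_at S u| <= 1 by rewrite deg1.
by rewrite -(uniq_u E E1) // in_edges_at; apply/andP.
Qed.

Lemma flip_all_cons S p Ps : flip_all S (p :: Ps) = flip_all (symd S (path_edge_set p)) Ps.
Proof. by []. Qed.

Lemma flip_all_cat S Ps1 Ps2 : flip_all S (Ps1 ++ Ps2) = flip_all (flip_all S Ps1) Ps2.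
Proof. exact: foldl_cat. Qed.

End PathEdges.

Section TowerWalks.
Variable h : nat.
Implicit Types (i j k : nat) (x y : TV h) (s : seq (TV h)).

Lemma ta_inj i j : i <= h -> j <= h -> ta i = ta j :> TV h -> i = j.
Proof. by move=> ih jh [] /(congr1 (@nat_of_ord _)); rewrite !inordK. Qed.

Lemma ta_ord (j : 'I_h.+1) : inr (j, true) = ta j :> TV h.
Proof. by rewrite /ta inord_val. Qed.

Lemma tb_ord (j : 'I_h.+1) : inr (j, false) = tb j :> TV h.
Proof. by rewrite /tb inord_val. Qed.

Lemma ta_eq_tb i j : (ta i == tb j :> TV h) = false.
Proof. by apply/eqP => -[]. Qed.

Lemma ta_eq_tv i : (ta i == tv :> TV h) = false. Proof. by []. Qed.
Lemma ta_eq_tw i : (ta i == tw :> TV h) = false. Proof. by []. Qed.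
Lemma tb_eq_tv i : (tb i == tv :> TV h) = false. Proof. by []. Qed.

Lemma tadjC x y : tadj x y = tadj y x.
Proof. by rewrite /tadj orbC. Qed.

Lemma tadj_tv y : tadj tv y -> y = ta 0.
Proof. by case: y => [[]|[j []]] //; rewrite /tadj /= orbF => /eqP j0; rewrite ta_ord j0. Qed.

Lemma tadj_tw y : tadj tw y -> y = tb 0.
Proof. by case: y => [[]|[j []]] //; rewrite /tadj /= => /eqP j0; rewrite tb_ord j0. Qed.

Lemma tadj_ta i y : i <= h -> tadj (ta i) y ->
  [\/ y = ta i.+1 /\ i < h, y = ta i.-1 /\ 0 < i, y = tb i | y = tv /\ i = 0].
Proof.
move=> ih; rewrite /tadj [ta i]/ta.
case: y => [[]|[j []]] /=; rewrite ?inordK //.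
- by move/eqP ->; apply: Or44.
- case/orP => /eqP ij; first by apply: Or42; rewrite ta_ord ij.
  by apply: Or41; rewrite ta_ord ij; split=> //; rewrite -ltnS -ij ltn_ord.
- by rewrite orbF => /eqP ij; apply: Or43; rewrite tb_ord ij.
Qed.

Lemma tadj_tb i y : i <= h -> tadj (tb i) y ->
  [\/ y = tb i.+1 /\ i < h, y = tb i.-1 /\ 0 < i, y = ta i | y = tw /\ i = 0].
Proof.
move=> ih; rewrite /tadj [tb i]/tb.
case: y => [[]|[j []]] /=; rewrite ?inordK ?orbF //.
- by move/eqP ->; apply: Or44.
- by move/eqP => ij; apply: Or43; rewrite ta_ord ij.
- case/orP => /eqP ij; first by apply: Or42; rewrite tb_ord ij.
  by apply: Or41; rewrite tb_ord ij; split=> //; rewrite -ltnS -ij ltn_ord.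
Qed.

Definition above i y : bool := if y is inr (j, _) then i < j else false.

Lemma above_ta i k : k <= h -> above i (ta k) = (i < k).
Proof. by move=> kh; rewrite /= inordK. Qed.

Lemma above_tb i k : k <= h -> above i (tb k) = (i < k).
Proof. by move=> kh; rewrite /= inordK. Qed.

Lemma tadj_above i x y : above i x -> tadj x y -> [\/ above i y, y = ta i | y = tb i].
Proof.
case: x => [//|[j []]] /= ij; have jh : j <= h by rewrite -ltnS ltn_ord.
  rewrite ta_ord => /(tadj_ta jh)[[-> jlt]|[-> j0]|->|[_ j0]].
  - by apply: Or31; rewrite above_ta //; lia.
  - have [ilt|] := ltnP i j.-1; first by apply: Or31; rewrite above_ta //; lia.
    by move=> ji; apply: Or32; congr ta; lia.
  - by apply: Or31; rewrite above_tb.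
  - by move: ij; rewrite j0.
rewrite tb_ord => /(tadj_tb jh)[[-> jlt]|[-> j0]|->|[_ j0]].
- by apply: Or31; rewrite above_tb //; lia.
- have [ilt|] := ltnP i j.-1; first by apply: Or31; rewrite above_tb //; lia.
  by move=> ji; apply: Or33; congr tb; lia.
- by apply: Or31; rewrite above_ta.
- by move: ij; rewrite j0.
Qed.

Lemma last_above i x s : above i x -> path tadj x s ->
  ta i \notin s -> tb i \notin s -> above i (last x s).
Proof.
elim: s x => [//|y s IH] x xi /= /andP[xy ys].
rewrite !inE !negb_or => /andP[ai_y ai_s] /andP[bi_y bi_s].
apply: IH => //; case: (tadj_above xi xy) => [//|yE|yE];
  by rewrite yE eqxx in ai_y bi_y.
Qed.

Lemma walk_from_tb i s : i <= h -> path tadj (tb i) s -> uniq (tb i :: s) ->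
  (forall j, j <= i -> ta j \notin s) -> last (tb i) s = tw ->
  forall j, ta j \notin s.
Proof.
elim: s i => [//|y s IH] i ih /= /andP[iy ys] /andP[bi_ys ys_uniq] no_a s_last j.
move: bi_ys; rewrite inE negb_or => /andP[_ bi_s].
have no_a_s k : k <= i -> ta k \notin s.
  by move=> ki; move: (no_a k ki); rewrite inE negb_or => /andP[].
case: (tadj_tb ih iy) => [[yE ilt]|[yE i0]|yE|[yE i0]]; subst y.
- (* once above level i, the walk can only come down through a_i or b_i *)
  have : above i (last (tb i.+1) s).
    by apply: last_above; rewrite ?above_tb ?no_a_s.
  by rewrite s_last.
- rewrite inE negb_or ta_eq_tb; apply: (IH i.-1) => //; first lia.
  by move=> k ki; apply: no_a_s; lia.
- by move: (no_a i (leqnn i)); rewrite mem_head.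
- case: s ys bi_s {IH ys_uniq s_last no_a_s no_a} => [_ _|z s /= /andP[/tadj_tw -> _]].
    by rewrite mem_seq1 ta_eq_tw.
  by rewrite i0 mem_head.
Qed.

Lemma walk_from_ta i s : i <= h -> path tadj (ta i) s -> uniq (ta i :: s) ->
  (forall j, j < i -> ta j \notin s) -> tv \notin s -> last (ta i) s = tw ->
  exists k, (forall j, j <= h -> [set ta j; tb j] \in path_edges (ta i :: s) -> j = k)
            /\ (forall j, i <= j <= k -> ta j \in ta i :: s).
Proof.
elim: s i => [|y s IH] i ih; first by move=> _ _ _ _ /eqP; rewrite ta_eq_tw.
move=> /= /andP[iy ys] /andP[ai_ys ys_uniq] no_a v_ys s_last.
move: ai_ys v_ys; rewrite !inE !negb_or => /andP[ai_y ai_s] /andP[v_y v_s].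
have no_a_s k : k < i -> ta k \notin s.
  by move=> ki; move: (no_a k ki); rewrite inE negb_or => /andP[].
rewrite path_edges_cons2.
case: (tadj_ta ih iy) => [[yE ilt]|[yE i0]|yE|[yE i0]]; subst y.
- have [|k [rung_k a_k]] := IH i.+1 ilt ys ys_uniq _ v_s s_last.
    by move=> k; rewrite ltnS leq_eqVlt => /predU1P[-> //|]; apply: no_a_s.
  exists k; split.
    move=> j jh; rewrite inE => /predU1P[/set2_eq[[_ /eqP]|[_ /eqP]]|].
    + by rewrite eq_sym ta_eq_tb.
    + by rewrite eq_sym ta_eq_tb.
    + exact: rung_k.
  move=> j /andP[ij jk]; have [->|ji] := eqVneq j i; first exact: mem_head.
  by rewrite inE a_k ?orbT // jk andbT ltn_neqAle eq_sym ji.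
- by move: (no_a i.-1); rewrite inE eqxx; lia.
- have no_a_b : forall j, ta j \notin s.
    apply: walk_from_tb ys ys_uniq _ s_last => // k.
    by rewrite leq_eqVlt => /predU1P[-> //|]; apply: no_a_s.
  exists i; split; last by move=> j ji; rewrite (_ : j = i) ?mem_head //; lia.
  move=> j jh; rewrite inE => /predU1P[/set2_eq[[/ta_inj -> //]|[_ /eqP]]|].
    by rewrite eq_sym ta_eq_tb.
  move=> rung_s; have := path_edges_vertex rung_s (set21 (ta j) (tb j)).
  by rewrite inE ta_eq_tb (negbTE (no_a_b j)).
- by rewrite eqxx in v_y.
Qed.

Lemma tower_walk s : path tadj tv s -> uniq (tv :: s) -> last tv s = tw ->
  exists k, (forall j, j <= h -> [set ta j; tb j] \in path_edges (tv :: s) -> j = k)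
            /\ (forall j, j <= k -> ta j \in s).
Proof.
case: s => [//|y s] /= /andP[/tadj_tv -> ys] /andP[v_ys ys_uniq] s_last.
have v_s : tv \notin s by move: v_ys; rewrite inE negb_or => /andP[].
have [//|k [rung_k a_k]] := walk_from_ta (leq0n h) ys ys_uniq _ v_s s_last.
exists k; split=> // j jh; rewrite path_edges_cons2 inE.
case/predU1P => [/set2_eq[[/eqP]|[_ /eqP]]|]; rewrite ?ta_eq_tv ?tb_eq_tv //.
exact: rung_k.
Qed.

End TowerWalks.

Section TowerInGraph.
Variables (V : finType) (h : nat) (f : TV h -> V).
Hypothesis f_inj : injective f.
Implicit Types (S M P : {set {set V}}) (p : seq V) (Ps : seq (seq V)).

Definition rung i : {set V} := fe f (ta i) (tb i).

Definition rung_count S : nat := #|[set i : 'I_h.+1 | rung i \in S]|.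

Definition interior_matched S : Prop :=
  forall x, x != tv -> x != tw -> #|edges_at S (f x)| = 1.

Lemma fe_imset x y : fe f x y = f @: [set x; y].
Proof. by rewrite imsetU1 imset_set1. Qed.

Lemma tower_path_lift p : tower_path f p ->
  exists s, [/\ p = map f (tv :: s), path tadj tv s, uniq (tv :: s) & last tv s = tw].
Proof.
move=> [p_uniq [p_head [p_nil [p_last p_edges]]]].
have p_size : 1 < size p.
  by case: p p_head p_nil p_last {p_uniq p_edges} => [//|x [|y p]] //= -> _ /f_inj.
have [q pq] : exists q, p = map f q.
  apply: codom_map => z zp; have [E Ep zE] := path_edges_cover p_size zp.
  have [x [y [_ Exy]]] := p_edges E Ep; move: zE; rewrite Exy !inE.
  by case/pred2P => ->; apply: codom_f.
subst p; case: q => [//|x s] in p_head p_size p_uniq p_last p_edges p_nil *.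
move: p_head => /= /f_inj x_tv; subst x.
move: p_uniq p_last; rewrite (map_inj_uniq f_inj) last_map => s_uniq /f_inj s_last.
exists s; split => //; apply: (path_of_edges (@tadjC h)) => E Es.
have := p_edges (f @: E); rewrite path_edges_map map_f // => /(_ isT)[x [y [xy fE]]].
by exists x, y; split => //; apply: (imset_inj f_inj); rewrite -fe_imset.
Qed.

Lemma tower_path_rungs p : tower_path f p -> exists k,
  (forall j, j <= h -> rung j \in path_edge_set p -> j = k) /\
  (forall j, j <= k -> f (ta j) \in p).
Proof.
case/tower_path_lift => s [-> s_path s_uniq s_last].
have [k [rung_k a_k]] := tower_walk s_path s_uniq s_last.
exists k; split => [j jh|j jk]; last by rewrite map_f // inE a_k ?orbT.
rewrite in_path_edge_set path_edges_map /rung fe_imset (mem_map (imset_inj f_inj)).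
exact: rung_k.
Qed.

Lemma tower_path_interior p x : tower_path f p -> x != tv -> x != tw ->
  f x != head (f x) p /\ f x != last (f x) p.
Proof.
case/tower_path_lift => s [-> _ _ s_last] xv xw.
by rewrite /= (last_map f) s_last !(inj_eq f_inj).
Qed.

Lemma interior_matched_symd S p : tower_path f p -> alternating S p ->
  interior_matched S -> interior_matched (symd S (path_edge_set p)).
Proof.
move=> tp alt matched x xv xw; have [x_head x_last] := tower_path_interior tp xv xw.
by rewrite card_edges_at_symd ?matched //; case: tp.
Qed.

Lemma matched_rung_top S p (i : 'I_h.+1) :
  tower_path f p -> alternating S p -> interior_matched S ->
  rung h \in path_edge_set p -> rung i \in S -> i = ord_max.
Proof.
move=> tp alt matched rung_h rung_i; have [k [rung_k a_k]] := tower_path_rungs tp.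
have ih : i <= h by rewrite -ltnS ltn_ord.
have kh : k = h by apply/esym/rung_k.
have a_v : ta i != tv :> TV h by [].
have a_w : ta i != tw :> TV h by [].
have [a_head a_last] := tower_path_interior tp a_v a_w.
have : rung i \in path_edge_set p.
  apply: (matched_edge_on_path _ alt _ a_head a_last _ rung_i (set21 _ _)).
  - by case: tp.
  - by rewrite a_k // kh.
  - exact: matched a_v a_w.
by move/(rung_k i ih) => ik; apply: val_inj; rewrite /= ik kh.
Qed.

Lemma rung_count_at_switch S p : tower_path f p -> alternating S p -> interior_matched S ->
  rung h \notin S -> rung h \in symd S (path_edge_set p) ->
  rung_count S = 0 /\ rung_count (symd S (path_edge_set p)) <= 1.
Proof.
move=> tp alt matched off on.
have rung_h : rung h \in path_edge_set p.
  by move: on; rewrite in_symd (negbTE off); case: (_ \in _).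
split.
  apply/eqP; rewrite cards_eq0 -subset0; apply/subsetP => i; rewrite inE => rung_i.
  have i_top := matched_rung_top tp alt matched rung_h rung_i.
  by case/negP: off; rewrite i_top in rung_i.
rewrite -(cards1 (@ord_max h)); apply: subset_leq_card; apply/subsetP => i.
rewrite in_set in_set1 => rung_i; apply/eqP.
exact: matched_rung_top tp (alternating_symd alt) (interior_matched_symd tp alt matched)
  rung_h rung_i.
Qed.

Lemma rung_count_symd S p : tower_path f p ->
  rung_count (symd S (path_edge_set p)) <= rung_count S + 1 /\
  rung_count S <= rung_count (symd S (path_edge_set p)) + 1.
Proof.
move=> tp; have [k [rung_k _]] := tower_path_rungs tp.
have one : #|[set i : 'I_h.+1 | rung i \in path_edge_set p]| <= 1.
  apply/card_le1_eqP => i j; rewrite !in_set -!in_path_edge_set => ri rj.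
  have ord_le (l : 'I_h.+1) : l <= h by rewrite -ltnS ltn_ord.
  by apply: val_inj; rewrite /= (rung_k i (ord_le i) ri) (rung_k j (ord_le j) rj).
have bound S' : rung_count (symd S' (path_edge_set p)) <= rung_count S' + 1.
  apply: leq_trans (card_symd_preimset (fun i : 'I_h.+1 => rung i) S' _) _.
  by rewrite leq_add2l.
split; first exact: bound.
by rewrite -{1}(symdK S (path_edge_set p)); apply: bound.
Qed.

Lemma rung_count_ge S m : m <= h -> (forall i, 1 <= i <= m -> rung i \in S) ->
  m <= rung_count S.
Proof.
move=> mh rungs_S.
have shift_inj : injective (fun i : 'I_m => inord i.+1 : 'I_h.+1).
  move=> i j /(congr1 (@nat_of_ord _)); have := ltn_ord i; have := ltn_ord j.
  by move=> jm im; rewrite !inordK ?ltnS; [move=> ?; apply: ord_inj | ..]; lia.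
rewrite -[m]card_ord -(card_imset _ shift_inj); apply: subset_leq_card.
apply/subsetP => _ /imsetP[i _ ->]; rewrite inE; have im := ltn_ord i.
by rewrite /rung inordK ?ltnS; [apply: rungs_S | ]; lia.
Qed.

Lemma rung_notin_locked M : interior_matched M -> locked_state f M -> rung h \notin M.
Proof.
move=> matched [_ [_ [_ [locked_a _]]]]; apply/negP => rung_h.
have /card_le1_eqP uniq_a : #|edges_at M (f (ta h))| <= 1 by rewrite matched.
have rung_locked : rung h = fe f (ta h) (ta h.-1).
  by apply: uniq_a; rewrite in_edges_at ?locked_a ?rung_h set21.
have := set22 (f (ta h)) (f (tb h)); rewrite -[[set _; _]]/(rung h) rung_locked.
by rewrite !inE !(inj_eq f_inj) ![tb h == _]eq_sym !ta_eq_tb.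
Qed.

Lemma well_behaved_cat M Ps1 Ps2 : well_behaved f M (Ps1 ++ Ps2) ->
  well_behaved f M Ps1 /\ well_behaved f (flip_all M Ps1) Ps2.
Proof.
elim: Ps1 M => [|p Ps1 IH] M /=; first by split.
by move=> [tp [alt /IH[wb1 wb2]]]; split; first by split.
Qed.

Lemma interior_matched_flip_all M Ps : well_behaved f M Ps ->
  interior_matched M -> interior_matched (flip_all M Ps).
Proof.
elim: Ps M => [//|p Ps IH] M /= [tp [alt wb]] matched.
exact: IH wb (interior_matched_symd tp alt matched).
Qed.

Lemma rung_count_flip_all M Ps : well_behaved f M Ps ->
  rung_count (flip_all M Ps) <= rung_count M + size Ps /\
  rung_count M <= rung_count (flip_all M Ps) + size Ps.
Proof.
elim: Ps M => [|p Ps IH] M; first by rewrite !addn0.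
rewrite flip_all_cons => -[tp [_ /IH[IH1 IH2]]]; have [up down] := rung_count_symd M tp.
by rewrite /=; split; lia.
Qed.

End TowerInGraph.

Theorem mainTheorem7 (V : finType) (e : rel V)
  (e_sym : symmetric e) (e_irr : irreflexive e)
  (h : nat) (f : TV h -> V) (M : {set {set V}}) (Ps : seq (seq V)) :
  tower_in_graph e f ->
  perfect_matching e M ->
  locked_state f M ->
  well_behaved f M Ps ->
  default_state f (flip_all M Ps) ->
  2 * h <= size Ps + 2.
Proof.
move=> [f_inj _] [_ M_deg] locked wb [_ [_ final]].
have [|h_gt1] := leqP h 1; first lia.
have M_matched : interior_matched f M by move=> x _ _; apply: M_deg.
have final_h : rung f h \in flip_all M Ps by apply: final; lia.
have [Ps1 [p [Ps2 [Ps_eq rung_off rung_on]]]] :=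
  foldl_switch (F := fun S p => symd S (path_edge_set p)) (g := fun S => rung f h \in S)
    (rung_notin_locked f_inj M_matched locked) final_h.
move: wb; rewrite Ps_eq => /well_behaved_cat[wb1 [tp [alt wb2]]].
have [S_empty S'_small] := rung_count_at_switch f_inj tp alt
  (interior_matched_flip_all f_inj wb1 M_matched) rung_off rung_on.
have [_ before] := rung_count_flip_all f_inj wb1.
have [after _] := rung_count_flip_all f_inj wb2.
have M_low : h - 2 <= rung_count f M.
  by apply: rung_count_ge => //; [lia | case: locked => [_ [_ []]]].
have final_low : h <= rung_count f (flip_all M Ps) by apply: rung_count_ge.
move: final_low; rewrite Ps_eq flip_all_cat flip_all_cons size_cat /=.
lia.
Qed.
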